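(* There is an absolute constant $c>0$ such that for every $n,m\ge1$ and every sequence $S\in[n]^m$, each of the four quantities $\mathit{WB}(S)$, $\mathit{SO}(S)$, $\mathit{WSF}(S)$, $\mathit{FF}(S)$ is at most $c$ times any other one of them plus $c\,m$.
   Context: Let $S=(s_1,\dots,s_m)\in[n]^m$. Logarithms are base 2. A weight function is $w:[n]\to\mathbb R_{>0}$. Write $W=\sum_{i=1}^n w(i)$ and $w[a:b]=\sum_{i=\min(a,b)}^{\max(a,b)} w(i)$. For a BST $T$ on $[n]$, $d_T(i)$ is the depth of $i$ (distance from the root, with the root at depth $0$), and $d_T(a,b)$ is the number of edges on the path between $a$ and $b$. The four bounds are: - Weighted balance: $\mathit{WB}(S)=\inf_w\sum_{j=1}^m\log\frac{W}{w(s_j)}$. - Static optimality: $\mathit{SO}(S)=\min_T\sum_{j=1}^m d_T(s_j)$. - Weighted static finger: $\mathit{WSF}(S)=\inf_{w,f}\sum_{j=1}^m\log\frac{w[f:s_j]}{\min\{w(f),w(s_j)\}}$, with $f$ ranging over $[n]$. - Fixed finger: $\mathit{FF}(S)=\min_{T,f}\sum_{j=1}^m d_T(f,s_j)$. Minima are taken over BSTs $T$ on $[n]$ and keys $f\in[n]$. *)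

From mathcomp Require Import all_boot all_order all_algebra.
From mathcomp Require Import classical_sets reals exp.
Set Implicit Arguments. Unset Strict Implicit. Unset Printing Implicit Defensive.
Import Order.TTheory GRing.Theory Num.Theory.
Local Open Scope ring_scope.
Local Open Scope classical_set_scope.

Inductive tree := Leaf | Node of tree & nat & tree.

Fixpoint inorder (t : tree) : seq nat :=
  match t with Leaf => [::] | Node l k r => inorder l ++ k :: inorder r end.

Definition is_bst_on (n : nat) (t : tree) : Prop := inorder t = iota 1 n.

Fixpoint depth (t : tree) (i : nat) : nat :=
  match t with
  | Leaf => 0%N
  | Node l k r =>
      if (i < k)%N then (depth l i).+1
      else if (k < i)%N then (depth r i).+1 else 0%N
  end.

Fixpoint dist (t : tree) (a b : nat) : nat :=
  match t with
  | Leaf => 0%N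
  | Node l k r =>
      if (a < k)%N && (b < k)%N then dist l a b
      else if (k < a)%N && (k < b)%N then dist r a b
      else (depth t a + depth t b)%N
  end.

Section Bounds.
Variable R : realType.

Definition log2 (x : R) : R := ln x / ln 2.

Definition in_range (n i : nat) : bool := (1 <= i <= n)%N.

Definition pos_weight (n : nat) (w : nat -> R) : Prop :=
  forall i, in_range n i -> 0 < w i.

Definition Wtot (n : nat) (w : nat -> R) : R := \sum_(1 <= i < n.+1) w i.

Definition wseg (w : nat -> R) (a b : nat) : R :=
  \sum_(minn a b <= i < (maxn a b).+1) w i.

Definition WB (n : nat) (S : seq nat) : R :=
  inf [set x | exists w, pos_weight n w /\
        x = \sum_(s <- S) log2 (Wtot n w / w s)].

Definition SO (n : nat) (S : seq nat) : R :=
  inf [set x | exists t, is_bst_on n t /\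
        x = ((\sum_(s <- S) depth t s)%N)%:R].

Definition WSF (n : nat) (S : seq nat) : R :=
  inf [set x | exists w f, pos_weight n w /\ in_range n f /\
        x = \sum_(s <- S) log2 (wseg w f s / Num.min (w f) (w s))].

Definition FF (n : nat) (S : seq nat) : R :=
  inf [set x | exists t f, is_bst_on n t /\ in_range n f /\
        x = ((\sum_(s <- S) dist t f s)%N)%:R].

End Bounds.

Inductive bound_kind := WBk | SOk | WSFk | FFk.

Definition bound (R : realType) (k : bound_kind) : nat -> seq nat -> R :=
  match k with
  | WBk => @WB R | SOk => @SO R | WSFk => @WSF R | FFk => @FF R
  end.

From mathcomp Require Import all_boot all_order all_algebra.
From mathcomp Require Import classical_sets reals exp.
From mathcomp Require Import ring lra zify.
Set Implicit Arguments. Unset Strict Implicit. Unset Printing Implicit Defensive.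
Import Order.TTheory GRing.Theory Num.Theory.
Local Open Scope ring_scope.

(* Every bound is compared with WB. Splitting [1..n] at the weighted median and recursing gives a BST
   in which key s has depth at most log (W / w s), so SO <= WB; a finger at the root gives FF <= SO,
   and a finger at a heaviest key gives WSF <= WB. Conversely, a tree with finger f yields the weights
   4^-d(f,s), and weights w with finger f yield the weights (min (w f) (w s) / w[f:s])^2; in both cases
   the total weight is at most 4, so WB <= 2 FF + 2 m and WB <= 2 WSF + 2 m. Hence c = 2 works. *)

Lemma pairwise_inorder_Node l k r : pairwise ltn (inorder (Node l k r)) ->
  [/\ pairwise ltn (inorder l), pairwise ltn (inorder r),
      {in inorder l, forall s, s < k}%N & {in inorder r, forall s, k < s}%N].
Proof.
rewrite /= pairwise_cat /= => /and3P[hlr pl /andP[hk pr]]; split=> // s.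
- by move=> sl; move/allrelP: hlr; apply; rewrite ?mem_head.
- by move/(allP hk).
Qed.

Lemma depth_Node_lt l k r s : (s < k)%N -> depth (Node l k r) s = (depth l s).+1.
Proof. by move=> h; rewrite /= h. Qed.

Lemma depth_Node_gt l k r s : (k < s)%N -> depth (Node l k r) s = (depth r s).+1.
Proof. by move=> h; rewrite /= h ltnNge (ltnW h). Qed.

Lemma depth_Node_root l k r : depth (Node l k r) k = 0%N.
Proof. by rewrite /= ltnn. Qed.

Lemma distC t a b : dist t a b = dist t b a.
Proof.
elim: t => [//|l IHl k r IHr] /=.
by rewrite IHl IHr andbC [(k < b)%N && _]andbC addnC.
Qed.

Lemma dist_Node_lt l k r a b : (a < k)%N -> (b < k)%N ->
  dist (Node l k r) a b = dist l a b.
Proof. by move=> ha hb; rewrite /= ha hb. Qed.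

Lemma dist_Node_gt l k r a b : (k < a)%N -> (k < b)%N ->
  dist (Node l k r) a b = dist r a b.
Proof. by move=> ha hb; rewrite /= ha hb ltnNge (ltnW ha). Qed.

Lemma dist_Node_across l k r a b : (a <= k <= b)%N ->
  dist (Node l k r) a b = (depth (Node l k r) a + depth (Node l k r) b)%N.
Proof.
move=> /andP[ha hb]; rewrite [LHS]/=.
have -> : ((a < k) && (b < k))%N = false by rewrite [(b < k)%N]ltnNge hb andbF.
by have -> : ((k < a) && (k < b))%N = false by rewrite [(k < a)%N]ltnNge ha.
Qed.

Lemma dist_Node_root l k r s : dist (Node l k r) k s = depth (Node l k r) s.
Proof.
case: (leqP k s) => h; first by rewrite dist_Node_across ?leqnn ?depth_Node_root.
by rewrite distC dist_Node_across ?leqnn ?(ltnW h) ?depth_Node_root ?addn0.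
Qed.

Lemma big_cat_cons (V : nmodType) (F : nat -> V) s1 x s2 :
  \sum_(i <- s1 ++ x :: s2) F i = \sum_(i <- s1) F i + (F x + \sum_(i <- s2) F i).
Proof. by rewrite big_cat big_cons. Qed.

Section RealFacts.
Local Open Scope classical_set_scope.
Variable R : realType.

Lemma inf_le_affine (A B : set R) (a b : R) : 0 < a -> has_lbound A -> B !=set0 ->
  (forall y, B y -> exists2 x, A x & x <= a * y + b) -> inf A <= a * inf B + b.
Proof.
move=> a0 lA nB AB.
suff : (inf A - b) / a <= inf B by rewrite ler_pdivrMr // => h; lra.
apply: lb_le_inf => // y /AB[x Ax le_x].
have := ge_inf lA Ax; rewrite ler_pdivrMr // => h; lra.
Qed.

Lemma ln2_gt0 : 0 < ln (2 : R).
Proof. by apply: ln_gt0; lra. Qed.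

Lemma log2_ge0 (x : R) : 1 <= x -> 0 <= log2 x.
Proof. by move=> x1; rewrite /log2 divr_ge0 //; [exact: ln_ge0 | exact/ltW/ln2_gt0]. Qed.

Lemma ler_log2 (x y : R) : 0 < x -> x <= y -> log2 x <= log2 y.
Proof.
move=> x0 xy; rewrite /log2 ler_pM2r ?invr_gt0 ?ln2_gt0 //.
by rewrite ler_ln ?posrE // (lt_le_trans x0).
Qed.

Lemma log2M (x y : R) : 0 < x -> 0 < y -> log2 (x * y) = log2 x + log2 y.
Proof. by move=> x0 y0; rewrite /log2 lnM ?posrE // mulrDl. Qed.

Lemma log2X (x : R) n : 0 < x -> log2 (x ^+ n) = log2 x *+ n.
Proof. by move=> x0; rewrite /log2 lnXn // mulrnAl. Qed.

Lemma log2_2 : log2 (2 : R) = 1.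
Proof. by rewrite /log2 divff // gt_eqF // ln2_gt0. Qed.

Lemma log2_4 : log2 (4 : R) = 2.
Proof. by rewrite -[4](_ : 2 ^+ 2 = _) ?log2X ?log2_2 //; lra. Qed.

Lemma log2_div_le (W v : R) : 0 < v -> 0 < W <= 4 -> log2 (W / v) <= 2 + log2 v^-1.
Proof.
move=> v0 /andP[W0 W4]; have lt04 : 0 < (4 : R) by lra.
rewrite -log2_4 -log2M ?invr_gt0 //.
by apply: ler_log2; rewrite ?divr_gt0 // ler_pM2r ?invr_gt0.
Qed.

Lemma sum_nat_gt0 (F : nat -> R) m n : (m < n)%N ->
  (forall i, (m <= i < n)%N -> 0 < F i) -> 0 < \sum_(m <= i < n) F i.
Proof.
move=> mn F0; rewrite big_ltn // ltr_wpDr ?F0 ?leqnn //.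
by rewrite big_nat sumr_ge0 // => i hi; apply/ltW/F0; lia.
Qed.

Lemma ler_sum_subrange (F : nat -> R) m m' n' n : (m <= m' <= n')%N -> (n' <= n)%N ->
  (forall i, (m <= i < n)%N -> 0 <= F i) ->
  \sum_(m' <= i < n') F i <= \sum_(m <= i < n) F i.
Proof.
move=> /andP[mm' m'n'] n'n F0.
rewrite [X in _ <= X](big_cat_nat (n := m')) ?(leq_trans m'n') //=.
rewrite [\sum_(m' <= i < n) _](big_cat_nat (n := n')) //=.
have Fl : 0 <= \sum_(m <= i < m') F i by rewrite big_nat sumr_ge0 // => i hi; apply: F0; lia.
have Fr : 0 <= \sum_(n' <= i < n) F i by rewrite big_nat sumr_ge0 // => i hi; apply: F0; lia.
lra.
Qed.

End RealFacts.

Section TreeMass.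
Variable R : realType.
Local Notation q := (4^-1 : R).

Definition depth_mass (t : tree) : R := \sum_(s <- inorder t) q ^+ depth t s.
Definition dist_mass (t : tree) (f : nat) : R := \sum_(s <- inorder t) q ^+ dist t f s.

Lemma depth_mass_ge0 t : 0 <= depth_mass t.
Proof. by apply: sumr_ge0 => s _; rewrite exprn_ge0 // invr_ge0. Qed.

Section Node.
Variables (l : tree) (k : nat) (r : tree).
Hypotheses (ltl : {in inorder l, forall s, s < k}%N) (gtr : {in inorder r, forall s, k < s}%N).

Lemma depth_mass_Node : depth_mass (Node l k r) = q * depth_mass l + 1 + q * depth_mass r.
Proof.
rewrite /depth_mass [inorder _]/= big_cat_cons depth_Node_root expr0 !mulr_sumr addrA.
congr (_ + _ + _); apply: eq_big_seq => s.
  by move/ltl=> sk; rewrite depth_Node_lt // exprS.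
by move/gtr=> ks; rewrite depth_Node_gt // exprS.
Qed.

Lemma dist_mass_Node_root :
  dist_mass (Node l k r) k = q * depth_mass l + 1 + q * depth_mass r.
Proof.
rewrite -depth_mass_Node /dist_mass /depth_mass.
by apply: eq_bigr => s _; rewrite dist_Node_root.
Qed.

Lemma dist_mass_Node_l f : f \in inorder l ->
  dist_mass (Node l k r) f = dist_mass l f + q ^+ (depth l f).+1 * (1 + q * depth_mass r).
Proof.
move=> /ltl fk; rewrite /dist_mass /depth_mass [inorder _]/= big_cat_cons.
rewrite dist_Node_across ?(ltnW fk) ?leqnn // depth_Node_root depth_Node_lt // addn0.
rewrite mulrDr mulr1 !mulr_sumr !addrA; congr (_ + _ + _); apply: eq_big_seq => s.
  by move/ltl=> sk; rewrite dist_Node_lt.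
move/gtr=> ks; rewrite dist_Node_across ?(ltnW fk) ?(ltnW ks) //.
by rewrite depth_Node_lt // depth_Node_gt // -exprS -exprD.
Qed.

Lemma dist_mass_Node_r f : f \in inorder r ->
  dist_mass (Node l k r) f = q ^+ (depth r f).+1 * (q * depth_mass l + 1) + dist_mass r f.
Proof.
move=> /gtr kf; rewrite /dist_mass /depth_mass [inorder _]/= big_cat_cons.
rewrite distC dist_Node_across ?(ltnW kf) ?leqnn // depth_Node_root depth_Node_gt // add0n.
rewrite mulrDr mulr1 !mulr_sumr !addrA; congr (_ + _ + _); last first.
  by apply: eq_big_seq => s /gtr ks; rewrite dist_Node_gt.
apply: eq_big_seq => s /ltl sk; rewrite distC dist_Node_across ?(ltnW kf) ?(ltnW sk) //.
by rewrite depth_Node_lt // depth_Node_gt // -exprS -exprD addnC.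
Qed.

End Node.

(* The term [- q ^+ depth t f / 2] is what makes the induction go through. *)
Lemma tree_mass_bounds t : pairwise ltn (inorder t) ->
  depth_mass t <= 2 /\
  {in inorder t, forall f, dist_mass t f <= 5 / 2 - q ^+ depth t f / 2}.
Proof.
elim: t => [|l IHl k r IHr]; first by split=> //; rewrite /depth_mass big_nil; lra.
move=> /pairwise_inorder_Node[pl pr ltl gtr].
have [Dl Gl] := IHl pl; have [Dr Gr] := IHr pr.
have Dl0 := depth_mass_ge0 l; have Dr0 := depth_mass_ge0 r.
have q4 : q * 4 = 1 by rewrite mulVf //; lra.
have q0 : 0 < q by rewrite invr_gt0; lra.
split; first by rewrite depth_mass_Node //; nra.
move=> f; rewrite [inorder _]/= mem_cat in_cons => /or3P[fl|/eqP->|fr].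
- have := Gl f fl; rewrite dist_mass_Node_l // depth_Node_lt ?ltl // exprS.
  have : 0 <= q ^+ depth l f by rewrite exprn_ge0 ?ltW.
  nra.
- by rewrite dist_mass_Node_root // depth_Node_root expr0; nra.
- have := Gr f fr; rewrite dist_mass_Node_r // depth_Node_gt ?gtr // exprS.
  have : 0 <= q ^+ depth r f by rewrite exprn_ge0 ?ltW.
  nra.
Qed.

End TreeMass.

Section WeightBalanced.
Variable R : realType.

Lemma weighted_median (w : nat -> R) a L : (0 < L)%N ->
  (forall i, (a <= i < a + L)%N -> 0 <= w i) ->
  exists2 j, (j < L)%N &
    \sum_(a <= i < a + j) w i <= (\sum_(a <= i < a + L) w i) / 2 /\
    \sum_((a + j).+1 <= i < a + L) w i <= (\sum_(a <= i < a + L) w i) / 2.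
Proof.
move=> L0 w0; set W := \sum_(a <= i < a + L) w i.
have W0 : 0 <= W by rewrite /W big_nat sumr_ge0.
pose P j := (j < L)%N && (W / 2 <= \sum_(a <= i < a + j.+1) w i).
have exP : exists j, P j by exists L.-1; rewrite /P prednK // leqnn -/W /=; lra.
have [j /andP[jL Wj] jmin] := ex_minnP exP.
exists j => //.
have WE : W = \sum_(a <= i < a + j.+1) w i + \sum_((a + j).+1 <= i < a + L) w i.
  by rewrite /W (big_cat_nat (n := a + j.+1)) ?addnS //; lia.
split; last by move: Wj; rewrite WE; lra.
case: j => [|j] in jL Wj jmin WE *; first by rewrite addn0 big_geq //; lra.
have : ~~ P j by apply/negP => /jmin; rewrite ltnn.
by rewrite /P (ltnW jL) /= -ltNge => /ltW.
Qed.

Lemma log2_le_half (X W v : R) : 0 < X -> X <= W / 2 -> 0 < v ->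
  1 + log2 (X / v) <= log2 (W / v).
Proof.
move=> X0 XW v0; have W2 : 0 < W / 2 := lt_le_trans X0 XW.
have W2v : 0 < W / 2 / v by rewrite divr_gt0.
have -> : W / v = (W / 2 / v) * 2 by field; rewrite gt_eqF.
rewrite [log2 (_ * 2)]log2M ?log2_2 //.
by rewrite addrC lerD2r; apply: ler_log2; rewrite ?divr_gt0 // ler_pM2r ?invr_gt0.
Qed.

Lemma weight_balanced_bst (w : nat -> R) L a :
  (forall i, (a <= i < a + L)%N -> 0 < w i) ->
  exists2 t, inorder t = iota a L & forall s, (a <= s < a + L)%N ->
    (depth t s)%:R <= log2 ((\sum_(a <= i < a + L) w i) / w s).
Proof.
elim/ltn_ind: L a => L IH a w0.
case: (posnP L) => [->|L0]; first by exists Leaf => // s; rewrite addn0; lia.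
set W := \sum_(a <= i < a + L) w i.
have [j jL [Wl Wr]] := weighted_median L0 (fun i hi => ltW (w0 i hi)).
have [tl tlE tlD] := IH j jL a (fun i hi => w0 i ltac:(lia)).
have [tr trE trD] := IH (L - j.+1)%N ltac:(lia) (a + j).+1 (fun i hi => w0 i ltac:(lia)).
rewrite -/W in Wl Wr; rewrite (_ : ((a + j).+1 + (L - j.+1) = a + L)%N) in trD; last by lia.
exists (Node tl (a + j) tr).
  by rewrite /= tlE trE [in RHS](_ : L = (j + (L - j.+1).+1)%N) ?iotaD //; lia.
move=> s sL; have ws := w0 s sL.
case: (ltngtP s (a + j)) => [slt|sgt|sj].
- rewrite depth_Node_lt // -nat1r.
  have Wl0 : 0 < \sum_(a <= i < a + j) w i by apply: sum_nat_gt0 => [|i hi]; [lia|apply: w0; lia].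
  by apply: le_trans (log2_le_half Wl0 Wl ws); rewrite lerD2l tlD //; lia.
- rewrite depth_Node_gt // -nat1r.
  have Wr0 : 0 < \sum_((a + j).+1 <= i < a + L) w i.
    by apply: sum_nat_gt0 => [|i hi]; [lia|apply: w0; lia].
  by apply: le_trans (log2_le_half Wr0 Wr ws); rewrite lerD2l trD //; lia.
- subst s; rewrite depth_Node_root; apply: log2_ge0; rewrite ler_pdivlMr // mul1r /W.
  have -> : w (a + j) = \sum_(a + j <= i < (a + j).+1) w i by rewrite big_nat1.
  apply: ler_sum_subrange => [||i hi]; try lia.
  exact/ltW/w0.
Qed.

End WeightBalanced.

Section PrefixSums.
Variable R : realType.

Lemma div_sqrD_le_telescope (p u : R) : 0 < p -> 0 < u ->
  u / (p + u) ^+ 2 <= p^-1 - (p + u)^-1.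
Proof.
move=> p0 u0; rewrite -subr_ge0.
have -> : p^-1 - (p + u)^-1 - u / (p + u) ^+ 2 = u ^+ 2 / (p * (p + u) ^+ 2).
  by field; apply/andP; split; lra.
by rewrite divr_ge0 ?exprn_ge0 ?mulr_ge0 //; lra.
Qed.

Variables (u P : nat -> R) (J : nat).
Hypotheses (u_gt0 : forall j, (j <= J)%N -> 0 < u j) (P0 : P 0%N = u 0%N)
  (PS : forall j, (j < J)%N -> P j.+1 = P j + u j.+1).

Lemma prefix_ge_first j : (j <= J)%N -> u 0%N <= P j.
Proof.
elim: j => [|j IH] jJ; first by rewrite P0.
by rewrite PS //; have := IH (ltnW jJ); have := u_gt0 jJ; lra.
Qed.

Lemma sum_div_sqr_prefix_le K : (K <= J)%N ->
  \sum_(0 <= j < K.+1) u j / P j ^+ 2 <= 2 / u 0%N - (P K)^-1.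
Proof.
have u00 : 0 < u 0%N by apply: u_gt0.
elim: K => [|K IH] KJ.
  rewrite big_nat1 P0 expr2 invfM mulrA divff ?mul1r ?gt_eqF //.
  by rewrite -[2 / _]/(2 * (u 0%N)^-1) mulr2n mulrDl mul1r addrK.
have PK0 : 0 < P K by apply: lt_le_trans (prefix_ge_first (ltnW KJ)).
rewrite big_nat_recr //= PS //.
have := IH (ltnW KJ); have := div_sqrD_le_telescope PK0 (u_gt0 KJ); lra.
Qed.

(* Each term is at most [u 0 * (u j / P j ^+ 2)], and the telescoping bound above sums these to at most [2]. *)
Lemma sum_sqr_min_div_prefix_le2 :
  \sum_(0 <= j < J.+1) (Num.min (u 0%N) (u j) / P j) ^+ 2 <= 2.
Proof.
have u00 : 0 < u 0%N by apply: u_gt0.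
have PJ0 : 0 < P J by apply: lt_le_trans (prefix_ge_first (leqnn J)).
apply: (le_trans (y := u 0%N * \sum_(0 <= j < J.+1) u j / P j ^+ 2)).
  rewrite mulr_sumr; apply: ler_sum_nat => j /andP[_ jJ]; have uj := u_gt0 jJ.
  have Pj : 0 < P j by apply: lt_le_trans (prefix_ge_first jJ).
  rewrite expr_div_n mulrA ler_pM2r ?invr_gt0 ?exprn_gt0 // expr2.
  by rewrite ler_pM ?ge_min ?lexx ?orbT // le_min ltW ?ltW.
apply: (le_trans (y := u 0%N * (2 / u 0%N - (P J)^-1))).
  by rewrite ler_pM2l // sum_div_sqr_prefix_le.
by rewrite mulrBr mulrCA divff ?mulr1 ?gt_eqF // gerBl mulr_ge0 // ltW // invr_gt0.
Qed.

End PrefixSums.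

Section Bounds.
Local Open Scope classical_set_scope.
Variable R : realType.

Definition WB_set n (S : seq nat) : set R :=
  [set x | exists w, pos_weight n w /\ x = \sum_(s <- S) log2 (Wtot n w / w s)].
Definition SO_set n (S : seq nat) : set R :=
  [set x | exists t, is_bst_on n t /\ x = ((\sum_(s <- S) depth t s)%N)%:R].
Definition WSF_set n (S : seq nat) : set R :=
  [set x | exists w f, pos_weight n w /\ in_range n f /\
     x = \sum_(s <- S) log2 (wseg w f s / Num.min (w f) (w s))].
Definition FF_set n (S : seq nat) : set R :=
  [set x | exists t f, is_bst_on n t /\ in_range n f /\
     x = ((\sum_(s <- S) dist t f s)%N)%:R].

Lemma wseg_bounds n (w : nat -> R) f s : pos_weight n w -> in_range n f -> in_range n s ->
  [/\ w s <= wseg w f s, w f <= wseg w f s & wseg w f s <= Wtot n w].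
Proof.
move=> w0 /andP[f1 fn] /andP[s1 sn].
have w0' i : (1 <= i < n.+1)%N -> 0 <= w i by move=> hi; apply/ltW/w0; rewrite /in_range; lia.
have single x : w x = \sum_(x <= i < x.+1) w i by rewrite big_nat1.
rewrite /wseg /Wtot (single s) (single f).
by split; apply: ler_sum_subrange => [||i hi]; try lia; apply: w0'; lia.
Qed.

Lemma weight_le_Wtot n (w : nat -> R) s : pos_weight n w -> in_range n s -> w s <= Wtot n w.
Proof. by move=> w0 sn; have [ws _ wW] := wseg_bounds w0 sn sn; apply: le_trans wW. Qed.

Lemma Wtot_iota n (w : nat -> R) : Wtot n w = \sum_(i <- iota 1 n) w i.
Proof. by rewrite /Wtot /index_iota subSS subn0. Qed.

Lemma log2_Wtot_div_ge0 n (w : nat -> R) s : pos_weight n w -> in_range n s ->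
  0 <= log2 (Wtot n w / w s).
Proof.
move=> w0 sn; apply: log2_ge0.
by rewrite ler_pdivlMr ?w0 // mul1r weight_le_Wtot.
Qed.

Lemma log2_wseg_div_ge0 n (w : nat -> R) f s : pos_weight n w -> in_range n f -> in_range n s ->
  0 <= log2 (wseg w f s / Num.min (w f) (w s)).
Proof.
move=> w0 fn sn; have [ws _ _] := wseg_bounds w0 fn sn.
apply: log2_ge0; rewrite ler_pdivlMr ?lt_min ?w0 // mul1r.
by apply: le_trans ws; rewrite ge_min lexx orbT.
Qed.

Lemma exists_bst n : exists t, is_bst_on n t.
Proof.
by have [t tE _] := @weight_balanced_bst R (fun _ => 1) n 1%N (fun _ _ => ltr01); exists t.
Qed.

Lemma pos_weight1 n : pos_weight n (fun _ => 1 : R).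
Proof. by move=> i _; apply: ltr01. Qed.

Lemma WB_set_neq0 n S : WB_set n S !=set0.
Proof. by eexists; exists (fun _ => 1); split; first apply: pos_weight1. Qed.

Lemma SO_set_neq0 n S : SO_set n S !=set0.
Proof. by have [t ht] := exists_bst n; eexists; exists t. Qed.

Lemma WSF_set_neq0 n S : (1 <= n)%N -> WSF_set n S !=set0.
Proof.
move=> n1; eexists; exists (fun _ => 1), 1%N.
by rewrite /in_range leqnn n1; split; first apply: pos_weight1.
Qed.

Lemma FF_set_neq0 n S : (1 <= n)%N -> FF_set n S !=set0.
Proof.
by move=> n1; have [t ht] := exists_bst n; eexists; exists t, 1%N; rewrite /in_range leqnn n1.
Qed.

Lemma WB_set_lbound n S : all (in_range n) S -> lbound (WB_set n S) 0.
Proof.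
move=> /allP Sn x [w [w0 ->]].
by rewrite big_seq sumr_ge0 // => s /Sn; apply: log2_Wtot_div_ge0.
Qed.

Lemma WSF_set_lbound n S : all (in_range n) S -> lbound (WSF_set n S) 0.
Proof.
move=> /allP Sn x [w [f [w0 [fn ->]]]].
by rewrite big_seq sumr_ge0 // => s /Sn; apply: log2_wseg_div_ge0.
Qed.

Lemma SO_set_lbound n S : lbound (SO_set n S) 0.
Proof. by move=> x [t [_ ->]]. Qed.

Lemma FF_set_lbound n S : lbound (FF_set n S) 0.
Proof. by move=> x [t [f [_ [_ ->]]]]. Qed.

Lemma WB_ge0 n S : all (in_range n) S -> 0 <= WB R n S.
Proof. by move=> Sn; apply: lb_le_inf; [apply: WB_set_neq0 | apply: WB_set_lbound]. Qed.

Lemma sum_le_affine (S : seq nat) (a b : nat -> R) (c : R) :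
  (forall s, s \in S -> a s <= c * b s + c) ->
  \sum_(s <- S) a s <= c * \sum_(s <- S) b s + c * (size S)%:R.
Proof.
elim: S => [|x S IH] ab; first by rewrite !big_nil !mulr0 addr0.
rewrite !big_cons /= -nat1r !mulrDr mulr1.
have := ab x (mem_head _ _); have := IH (fun s sS => ab s (mem_behead (s := x :: S) sS)); lra.
Qed.

Lemma SO_le_WB n S : all (in_range n) S -> SO R n S <= WB R n S.
Proof.
move=> /allP Sn; rewrite -[WB R n S]mul1r -[_ * _]addr0.
apply: inf_le_affine => //; [by exists 0; apply: SO_set_lbound | exact: WB_set_neq0 |].
move=> _ [w [w0 ->]].
have [t tE tdepth] := weight_balanced_bst (L := n) (a := 1%N) (fun i hi => w0 i hi).
exists ((\sum_(s <- S) depth t s)%N)%:R; first by exists t.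
rewrite mul1r addr0 natr_sum big_seq [leRHS]big_seq; apply: ler_sum => s /Sn sn.
by rewrite /Wtot -add1n tdepth.
Qed.

Lemma FF_le_SO n S : (1 <= n)%N -> FF R n S <= SO R n S.
Proof.
move=> n1; rewrite -[SO R n S]mul1r -[_ * _]addr0.
apply: inf_le_affine => //; [by exists 0; apply: FF_set_lbound | exact: SO_set_neq0 |].
move=> _ [[|l k r] [tn ->]]; first by move: tn; rewrite /is_bst_on; case: n n1.
have kn : in_range n k by rewrite /in_range -mem_iota -tn /= mem_cat mem_head orbT.
exists ((\sum_(s <- S) dist (Node l k r) k s)%N)%:R; first by exists (Node l k r), k.
by rewrite mul1r addr0; under eq_bigr do rewrite dist_Node_root.
Qed.

Lemma exists_max_weight n (w : nat -> R) : (1 <= n)%N ->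
  exists2 f, in_range n f & forall i, in_range n i -> w i <= w f.
Proof.
move=> n1; pose P := fun i : 'I_n.+1 => (0 < i)%N.
have [f f0 fmax] := @arg_maxP _ _ _ (@ord_max n) P (fun i => w i) n1.
exists f; first by apply/andP; split; [exact: f0 | rewrite -ltnS ltn_ord].
by move=> i /andP[i1 iN]; apply: (fmax (Ordinal (iN : (i < n.+1)%N))).
Qed.

Lemma WSF_le_WB n S : (1 <= n)%N -> all (in_range n) S -> WSF R n S <= WB R n S.
Proof.
move=> n1 Sn; rewrite -[WB R n S]mul1r -[_ * _]addr0.
apply: inf_le_affine => //; [by exists 0; apply: WSF_set_lbound | exact: WB_set_neq0 |].
move=> _ [w [w0 ->]]; have [f fn fmax] := exists_max_weight w n1.
exists (\sum_(s <- S) log2 (wseg w f s / Num.min (w f) (w s))); first by exists w, f.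
rewrite mul1r addr0 big_seq [leRHS]big_seq; apply: ler_sum => s /(allP Sn) sn.
have [ws _ wW] := wseg_bounds w0 fn sn.
rewrite min_r ?fmax //; apply: ler_log2; first by rewrite divr_gt0 ?(lt_le_trans (w0 s sn)).
by rewrite ler_pM2r ?invr_gt0 ?w0.
Qed.

Lemma WB_le_FF n S : (1 <= n)%N -> all (in_range n) S ->
  WB R n S <= 2 * FF R n S + 2 * (size S)%:R.
Proof.
move=> n1 /allP Sn.
apply: inf_le_affine; [lra | by exists 0; apply: WB_set_lbound; apply/allP | exact: FF_set_neq0 |].
move=> _ [t [f [tn [fn ->]]]].
pose w s : R := 4^-1 ^+ dist t f s.
have w0 : pos_weight n w by move=> i _; rewrite exprn_gt0 // invr_gt0; lra.
exists (\sum_(s <- S) log2 (Wtot n w / w s)); first by exists w.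
have W4 : Wtot n w <= 4.
  have sorted_t : pairwise ltn (inorder t).
    by rewrite tn -sorted_pairwise ?iota_ltn_sorted //; apply: ltn_trans.
  have ft : f \in inorder t by rewrite tn mem_iota; move: fn; rewrite /in_range; lia.
  have [_ /(_ f ft)] := tree_mass_bounds R sorted_t.
  have : 0 <= 4^-1 ^+ depth t f / 2 :> R by rewrite divr_ge0 ?exprn_ge0 ?invr_ge0.
  by rewrite Wtot_iota -tn /dist_mass; lra.
rewrite natr_sum; apply: sum_le_affine => s /Sn sn.
have ws : 0 < w s := w0 s sn.
apply: le_trans (log2_div_le ws _) _; first by rewrite W4 (lt_le_trans ws) ?weight_le_Wtot.
by rewrite /w -exprVn invrK log2X ?log2_4; [rewrite mulr_natr addrC | lra].
Qed.

Definition finger_weight (w : nat -> R) f s := (Num.min (w f) (w s) / wseg w f s) ^+ 2.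

(* On each side of [f] the finger weights are bounded by [sum_sqr_min_div_prefix_le2], with [wseg w f] as the prefix sums walking away from [f]. *)
Lemma Wtot_finger_weight_le4 n (w : nat -> R) f : pos_weight n w -> in_range n f ->
  Wtot n (finger_weight w f) <= 4.
Proof.
move=> w0 fn; have /andP[f1 fN] := fn; set F := finger_weight w f.
have F0 s : 0 <= F s by rewrite sqr_ge0.
have right : \sum_(f <= s < n.+1) F s <= 2.
  rewrite -{1}[f]add0n big_addn subSn //.
  apply: (@sum_sqr_min_div_prefix_le2 _ (fun j => w (j + f)%N) (fun j => wseg w f (j + f))).
  - by move=> j jn; apply: w0; rewrite /in_range; lia.
  - by rewrite /wseg add0n minnn maxnn big_nat1.
  - move=> j jn; rewrite /wseg (_ : minn f (j.+1 + f) = f) 1?(_ : minn f (j + f) = f); try lia.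
    rewrite (_ : maxn f (j.+1 + f) = (j + f).+1) 1?(_ : maxn f (j + f) = j + f)%N; try lia.
    by rewrite big_nat_recr //=; lia.
have left : \sum_(1 <= s < f.+1) F s <= 2.
  rewrite big_nat_rev big_add1 /=.
  under eq_bigr => i _ do rewrite add1n !subSS.
  have := @sum_sqr_min_div_prefix_le2 R (fun j => w (f - j)%N) (fun j => wseg w f (f - j)) f.-1.
  rewrite subn0 prednK //; apply.
  - by move=> j jn; apply: w0; rewrite /in_range; lia.
  - by rewrite /wseg minnn maxnn big_nat1.
  - move=> j jn; rewrite /wseg (minn_idPr (leq_subr _ _)) (minn_idPr (leq_subr _ _)).
    rewrite (maxn_idPl (leq_subr _ _)) (maxn_idPl (leq_subr _ _)) big_ltn 1?addrC; last by lia.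
    by rewrite (_ : (f - j.+1).+1 = f - j)%N //; lia.
rewrite big_ltn in right; last by lia.
rewrite /Wtot (big_cat_nat (n := f.+1)) //=.
have := F0 f; lra.
Qed.

Lemma WB_le_WSF n S : (1 <= n)%N -> all (in_range n) S ->
  WB R n S <= 2 * WSF R n S + 2 * (size S)%:R.
Proof.
move=> n1 /allP Sn.
apply: inf_le_affine; [lra | by exists 0; apply: WB_set_lbound; apply/allP | exact: WSF_set_neq0 |].
move=> _ [w [f [w0 [fn ->]]]].
have ratio_gt0 s : in_range n s -> 0 < Num.min (w f) (w s) / wseg w f s.
  move=> sn; have [ws _ _] := wseg_bounds w0 fn sn.
  by rewrite divr_gt0 ?lt_min ?w0 ?(lt_le_trans (w0 s sn)).
have fw0 : pos_weight n (finger_weight w f) by move=> s sn; rewrite exprn_gt0 ?ratio_gt0.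
exists (\sum_(s <- S) log2 (Wtot n (finger_weight w f) / finger_weight w f s)); first by exists (finger_weight w f).
apply: sum_le_affine => s /Sn sn; have fws := fw0 s sn.
apply: le_trans (log2_div_le fws _) _.
  by rewrite Wtot_finger_weight_le4 // (lt_le_trans fws) ?weight_le_Wtot.
by rewrite /finger_weight -exprVn log2X ?invr_gt0 ?ratio_gt0 // invf_div mulr2n; lra.
Qed.

Lemma bound_le_WB X n S : (1 <= n)%N -> all (in_range n) S -> bound R X n S <= WB R n S.
Proof.
move=> n1 Sn; case: X => /=.
- exact: lexx.
- exact: SO_le_WB.
- exact: WSF_le_WB.
- exact: le_trans (FF_le_SO S n1) (SO_le_WB Sn).
Qed.

Lemma WB_le_bound Y n S : (1 <= n)%N -> all (in_range n) S ->
  WB R n S <= 2 * bound R Y n S + 2 * (size S)%:R.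
Proof.
move=> n1 Sn; case: Y => /=.
- by have := WB_ge0 Sn; have : 0 <= (size S)%:R :> R := ler0n _ _; lra.
- by have := WB_le_FF n1 Sn; have := FF_le_SO S n1; lra.
- exact: WB_le_WSF.
- exact: WB_le_FF.
Qed.

End Bounds.

Theorem mainTheorem7 (R : realType) :
  exists c : R, 0 < c /\
    forall (n m : nat) (S : seq nat),
      (1 <= n)%N -> (1 <= m)%N -> size S = m ->
      all (in_range n) S ->
      forall X Y : bound_kind,
        bound R X n S <= c * bound R Y n S + c * m%:R.
Proof.
exists 2; split; first lra.
move=> n m S n1 _ <- Sn X Y.
exact: le_trans (bound_le_WB R X n1 Sn) (WB_le_bound R Y n1 Sn).
Qed.
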